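(* Let $M\ge1$ and for $m=1,\dots,M$ let $\boldsymbol{W}_m\in\mathbb{R}^{k_m\times d}$, $\boldsymbol{b}_m\in\mathbb{R}^{k_m}$, and $\boldsymbol{a}\in\mathbb{R}^d$. Suppose for each $m$: (a) $\phi_m:\mathbb{R}^{k_m}\to I_m$ is convex and twice differentiable, where $I_m\subseteq\mathbb{R}$ is an interval; (b) $\rho_m:I_m\to[0,\infty)$ is differentiable and nondecreasing; (c) $\sigma_m=\nabla\phi_m$. Then, with $\boldsymbol{z}_m=\boldsymbol{W}_m\boldsymbol{x}+\boldsymbol{b}_m$, the function $$h(\boldsymbol{x})=\boldsymbol{a}+\sum_{m=1}^M\rho_m(\phi_m(\boldsymbol{z}_m))\,\boldsymbol{W}_m^\top\sigma_m(\boldsymbol{z}_m)$$ is the gradient of a convex continuously differentiable function on $\mathbb{R}^d$, i.e. an mGradNet.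
   Context: An mGradNet is a function $f:\mathbb{R}^d\to\mathbb{R}^d$ with $f=\nabla F$ for some convex continuously differentiable $F:\mathbb{R}^d\to\mathbb{R}$. *)

From HB Require Import structures.
From mathcomp Require Import all_boot all_order all_algebra.
From mathcomp Require Import all_classical all_reals all_analysis.
Set Implicit Arguments. Unset Strict Implicit. Unset Printing Implicit Defensive.
Import Order.TTheory GRing.Theory Num.Theory.
Import numFieldNormedType.Exports.
Local Open Scope classical_set_scope.
Local Open Scope ring_scope.

Definition dotv (R : realType) (n : nat) (u v : 'cV[R]_n) : R :=
  \sum_(i < n) u i 0 * v i 0.

Definition is_gradient (R : realType) (n : nat)
    (F : 'cV[R]_n -> R) (g : 'cV[R]_n -> 'cV[R]_n) : Prop :=
  forall x, differentiable F x /\ forall v, 'd F x v = dotv (g x) v.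

Definition convex_fun (R : realType) (n : nat) (F : 'cV[R]_n -> R) : Prop :=
  forall (x y : 'cV[R]_n) (t : R), 0 <= t -> t <= 1 ->
    F (t *: x + (1 - t) *: y) <= t * F x + (1 - t) * F y.

(* mGradNet: f = grad F with F convex and continuously differentiable;
   since F has gradient f, F is C^1 iff f is continuous. *)
Definition mGradNet (R : realType) (d : nat) (f : 'cV[R]_d -> 'cV[R]_d) : Prop :=
  exists F : 'cV[R]_d -> R, convex_fun F /\ is_gradient F f /\ continuous f.

(* rho : I -> R is differentiable on the interval I (one-sided derivative at
   endpoints belonging to I): for each x in I, the difference quotient has a
   limit as y -> x within I \ {x}. *)
Definition derivable_on_itv (R : realType) (I : interval R) (rho : R -> R) : Prop :=
  forall x, x \in I -> exists l : R,
    (fun y => (rho y - rho x) / (y - x)) @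
      (within (fun y => y \in I /\ y != x) (nbhs x)) --> l.

(* Take F x = <a, x> + sum_m P_m (phi_m (W_m x + b_m)), where P_m is a primitive
   of rho_m on I_m.  Since rho_m is nondecreasing, every increment of P_m is
   squeezed between rho_m s (u - s) and rho_m u (u - s).  The lower bound says that
   P_m lies above its tangent lines, hence P_m is convex, and nondecreasing because
   rho_m >= 0; so each term is a convex nondecreasing function of a convex function
   of an affine map, hence convex.  The two bounds together, with the continuity of
   rho_m, give P_m' = rho_m, so the chain rule yields grad F = h.  Differentiability
   of rho_m is only used through its continuity on I_m. *)

From HB Require Import structures.
From mathcomp Require Import all_boot all_order all_algebra.
From mathcomp Require Import all_classical all_reals all_analysis.
From mathcomp Require Import ring lra.
Import Order.TTheory GRing.Theory Num.Theory.
Import numFieldNormedType.Exports.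
Set Implicit Arguments. Unset Strict Implicit. Unset Printing Implicit Defensive.
Local Open Scope classical_set_scope.
Local Open Scope ring_scope.

Section interval_facts.
Variable R : realType.
Implicit Types (I : interval R) (a b u v t : R).

Lemma subset_itvcc_interval I a b :
  a \in I -> b \in I -> `[a, b] `<=` [set` I].
Proof.
move=> aI bI x /=; rewrite in_itv /= => /andP[ax xb].
by apply: (interval_is_interval aI bI); rewrite ax xb.
Qed.

Lemma convex_comb_in_interval I u v t :
  u \in I -> v \in I -> 0 <= t -> t <= 1 -> t * u + (1 - t) * v \in I.
Proof.
move=> uI vI t0 t1.
have h1 : 0 <= t * (1 - t) by rewrite mulr_ge0 // subr_ge0.
case: (leP u v) => uv;
  [apply: (interval_is_interval uI vI) | apply: (interval_is_interval vI uI)];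
  apply/andP; split; nra.
Qed.

End interval_facts.

Definition convex_on_itv (R : realType) (I : interval R) (g : R -> R) :=
  forall u v t, u \in I -> v \in I -> 0 <= t -> t <= 1 ->
    g (t * u + (1 - t) * v) <= t * g u + (1 - t) * g v.

Section supporting_lines.
Variables (R : realType) (I : interval R) (f g : R -> R).
Hypothesis f_above : forall s u, s \in I -> u \in I -> g s * (u - s) <= f u - f s.

Lemma convex_on_itv_of_supporting_lines : convex_on_itv I f.
Proof.
move=> u v t uI vI t0 t1; set w := t * u + (1 - t) * v.
have wI : w \in I by exact: convex_comb_in_interval.
have Hu := f_above wI uI; have Hv := f_above wI vI.
have Hw : t * (g w * (u - w)) + (1 - t) * (g w * (v - w)) = 0 by rewrite /w; ring.
have t1_ge0 : 0 <= 1 - t by rewrite subr_ge0.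
have tHu := ler_wpM2l t0 Hu; have tHv := ler_wpM2l t1_ge0 Hv.
lra.
Qed.

Lemma nondecreasing_on_itv_of_supporting_lines :
  (forall s, s \in I -> 0 <= g s) -> {in I &, {homo f : x y / x <= y}}.
Proof.
move=> g_ge0 u v uI vI uv; rewrite -subr_ge0.
by apply: le_trans (f_above uI vI); rewrite mulr_ge0 ?g_ge0 ?subr_ge0.
Qed.

End supporting_lines.

Section oriented_integral.
Variable R : realType.
Implicit Types (rho : R -> R) (a b c s u v x : R).

Definition oint rho a b : R :=
  if a <= b then \int[lebesgue_measure]_(x in `[a, b]) rho x
  else - \int[lebesgue_measure]_(x in `[b, a]) rho x.

Lemma oint_le rho a b : a <= b ->
  oint rho a b = \int[lebesgue_measure]_(x in `[a, b]) rho x.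
Proof. by rewrite /oint => ->. Qed.

Lemma oint_ge rho a b : b <= a ->
  oint rho a b = - \int[lebesgue_measure]_(x in `[b, a]) rho x.
Proof.
rewrite /oint => ba; case: ifP => // ab.
have -> : a = b by apply/le_anti; rewrite ab ba.
by rewrite set_itv1 Rintegral_set1 oppr0.
Qed.

Variables (I : interval R) (rho : R -> R).
Hypothesis rho_cont : {within [set` I], continuous rho}.
Hypothesis rho_mono : {in I &, {homo rho : x y / x <= y}}.

Let integrable_itvcc a b : a \in I -> b \in I ->
  lebesgue_measure.-integrable `[a, b] (EFin \o rho).
Proof.
move=> aI bI; apply: continuous_compact_integrable; first exact: segment_compact.
by apply: continuous_subspaceW rho_cont; apply: subset_itvcc_interval.
Qed.

Let Rintegral_itvcc_split a x b : a <= x -> x <= b -> a \in I -> b \in I ->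
  \int[lebesgue_measure]_(y in `[a, b]) rho y =
  \int[lebesgue_measure]_(y in `[a, x]) rho y +
  \int[lebesgue_measure]_(y in `[x, b]) rho y.
Proof.
move=> ax xb aI bI; have iab := integrable_itvcc aI bI.
have := @Rintegral_itvB R rho (BLeft a) (BRight b) x iab.
rewrite !bnd_simp => /(_ ax xb).
rewrite Rintegral_itv_obnd_cbnd => [<-|]; first by rewrite addrC subrK.
by apply: integrableS iab => //; apply: subset_itvr; rewrite bnd_simp.
Qed.

Lemma oint_split a x b : a \in I -> x \in I -> b \in I ->
  oint rho a x + oint rho x b = oint rho a b.
Proof.
move=> aI xI bI.
case: (leP a x) => [ax|/ltW xa]; case: (leP x b) => [xb|/ltW bx].
- by rewrite !oint_le ?(le_trans ax xb) // -Rintegral_itvcc_split.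
- rewrite (oint_le _ ax) (oint_ge _ bx); case: (leP a b) => [ab|/ltW ba].
  + by rewrite (oint_le _ ab) (Rintegral_itvcc_split ab bx aI xI) addrK.
  + rewrite (oint_ge _ ba) (Rintegral_itvcc_split ba ax bI xI); lra.
- rewrite (oint_ge _ xa) (oint_le _ xb); case: (leP a b) => [ab|/ltW ba].
  + by rewrite (oint_le _ ab) (Rintegral_itvcc_split xa ab xI bI) addKr.
  + rewrite (oint_ge _ ba) (Rintegral_itvcc_split xb ba xI aI); lra.
- rewrite !oint_ge ?(le_trans bx xa) // (Rintegral_itvcc_split bx xa bI aI); lra.
Qed.

Let Rintegral_itvcc_bounds a b : a <= b -> a \in I -> b \in I ->
  rho a * (b - a) <= \int[lebesgue_measure]_(x in `[a, b]) rho x <= rho b * (b - a).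
Proof.
move=> ab aI bI.
have mu_ab : fine (lebesgue_measure `[a, b]) = b - a.
  by rewrite lebesgue_measure_itv /= lte_fin; case: ltgtP ab => // -> _; rewrite subrr.
have cst_int r : lebesgue_measure.-integrable `[a, b] (EFin \o cst r).
  apply: continuous_compact_integrable; first exact: segment_compact.
  exact/continuous_subspaceT/cst_continuous.
rewrite -mu_ab -!Rintegral_cst //; apply/andP; split;
  apply: le_Rintegral => //; try exact: cst_int; try exact: integrable_itvcc;
  move=> x xab; have xI := subset_itvcc_interval aI bI xab;
  move: xab; rewrite /= in_itv /= => /andP[ax xb]; exact: rho_mono.
Qed.

Lemma oint_bounds s u : s \in I -> u \in I ->
  rho s * (u - s) <= oint rho s u <= rho u * (u - s).
Proof.
move=> sI uI; case: (leP s u) => [su|/ltW us].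
  by rewrite oint_le //; exact: Rintegral_itvcc_bounds.
rewrite oint_ge // -(opprB s u) !mulrN !lerN2 andbC.
exact: Rintegral_itvcc_bounds.
Qed.

Lemma oint_increment_bounds c s u : c \in I -> s \in I -> u \in I ->
  rho s * (u - s) <= oint rho c u - oint rho c s <= rho u * (u - s).
Proof.
move=> cI sI uI; rewrite -(oint_split cI sI uI) addrAC subrr add0r.
exact: oint_bounds.
Qed.

Lemma oint_convex c : c \in I -> convex_on_itv I (oint rho c).
Proof.
move=> cI.
apply: (convex_on_itv_of_supporting_lines (f := oint rho c) (g := rho)) => s w sI wI.
by have /andP[] := oint_increment_bounds cI sI wI.
Qed.

Lemma oint_nondecreasing c : c \in I -> (forall s, s \in I -> 0 <= rho s) ->
  {in I &, {homo oint rho c : u v / u <= v}}.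
Proof.
move=> cI; apply: (nondecreasing_on_itv_of_supporting_lines (g := rho)) => s u sI uI.
by have /andP[] := oint_increment_bounds cI sI uI.
Qed.

Lemma oint_quotient_dist c s u : c \in I -> s \in I -> u \in I -> u != s ->
  `|(oint rho c u - oint rho c s) / (u - s) - rho s| <= `|rho u - rho s|.
Proof.
move=> cI sI uI us; rewrite -subr_eq0 in us.
case/andP: (oint_increment_bounds cI sI uI).
set D := oint rho c u - oint rho c s => lbD ubD.
have -> : D / (u - s) - rho s = (D - rho s * (u - s)) / (u - s) by field.
rewrite normrM normfV ler_pdivrMr ?normr_gt0 // -normrM.
rewrite ger0_norm ?subr_ge0 // (le_trans _ (ler_norm _)) //.
by rewrite mulrBl lerD2r.
Qed.

(* The primitive only matters on I; off I it is continued by its tangent line at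
   s, which makes it differentiable at s even when s is an endpoint of I.  As phi
   takes its values in I, composing with phi never sees the continuation. *)
Definition oint_tangent c s u :=
  if u \in I then oint rho c u else oint rho c s + rho s * (u - s).

Lemma oint_tangent_derive c s : c \in I -> s \in I ->
  h^-1 *: ((oint_tangent c s \o shift s) (h *: 1) - oint_tangent c s s)
    @[h --> 0^'] --> rho s.
Proof.
move=> cI sI; apply/cvgrPdist_lt => e e0.
have /cvgrPdist_lt /(_ e e0) := (subspace_continuousP _ _).1 rho_cont s sI.
rewrite !near_withinE => /nbhs_normP [d d0 Hd].
apply/nbhs_normP; exists d => //= h; rewrite /ball_ /= sub0r normrN => hd h0.
rewrite -[h%:A]/(h * 1) mulr1 -[_^-1 *: _]/(_ * _) /oint_tangent sI.
case: ifP => hsI; last first.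
  by rewrite addrK addrAC subrr add0r mulrC mulfK // subrr normr0.
have hs : h + s != s by rewrite -subr_eq0 addrK.
have := oint_quotient_dist cI sI hsI hs; rewrite addrK distrC mulrC => /le_lt_trans.
apply; rewrite distrC; apply: Hd => //.
by rewrite /ball_ /= opprD addrCA subrr addr0 normrN.
Qed.

Lemma oint_tangent_is_diff c s : c \in I -> s \in I ->
  is_diff s (oint_tangent c s) (fun h => h * rho s).
Proof.
move=> cI sI; have hc := oint_tangent_derive cI sI.
have dv : derivable (oint_tangent c s) s 1 by exact: cvgP hc.
have dT : differentiable (oint_tangent c s) s by exact/derivable1_diffP.
apply: DiffDef; first exact: dT.
apply/funext => h /=.
rewrite -[h in LHS]mulr1 -[h * 1]/(h *: (1 : R)) linearZ /= -deriveE; last exact: dT.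
by rewrite /derive (cvg_lim _ hc).
Qed.

End oriented_integral.

Lemma derivable_on_itv_continuous (R : realType) (I : interval R) (rho : R -> R) :
  derivable_on_itv I rho -> {within [set` I], continuous rho}.
Proof.
move=> rho_der; apply/subspace_continuousP => s sI; have [l hl] := rho_der s sI.
apply/cvgrPdist_lt => e e0; have K0 : 0 < `|l| + 1 by rewrite ltr_wpDl.
have /cvgrPdist_lt /(_ 1 ltr01) near_l := hl; rewrite near_withinE in near_l.
have near_s : \forall y \near s, `|s - y| < e / (`|l| + 1).
  by apply/nbhs_normP; exists (e / (`|l| + 1)) => /=; rewrite ?divr_gt0.
apply: filterS2 near_l near_s => y yl ys yI.
have [->|y_neq_s] := eqVneq y s; first by rewrite subrr normr0.
set q := (rho y - rho s) / (y - s) in yl.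
have -> : rho s - rho y = q * (s - y).
  by rewrite /q -(opprB y s) mulrN divfK ?opprB // subr_eq0.
have q_lt : `|q| < `|l| + 1.
  by rewrite -(subrK l q) (le_lt_trans (ler_normD _ _)) // addrC ltrD2l distrC yl.
rewrite normrM; have := ltr_pM (normr_ge0 q) (normr_ge0 _) q_lt ys.
by rewrite mulrCA mulfV ?gt_eqF // mulr1.
Qed.

Lemma continuous_within_comp (T U V : topologicalType) (A : set U)
    (f : T -> U) (g : U -> V) :
  (forall x, A (f x)) -> continuous f -> {within A, continuous g} ->
  continuous (g \o f).
Proof.
move=> fA f_cont /subspace_continuousP g_cont x.
apply: cvg_comp _ (g_cont _ (fA x)) => P /(f_cont x).
by apply: (@filterS _ (nbhs x)) => t /=; apply; exact: fA.
Qed.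

Section dot_product.
Variables (R : realType) (n : nat).
Implicit Types (u v w : 'cV[R]_n) (r : R).

Lemma dotvE u v : dotv u v = (u^T *m v) 0 0.
Proof. by rewrite /dotv mxE; apply: eq_bigr => i _; rewrite mxE. Qed.

Lemma dotvDl u w v : dotv (u + w) v = dotv u v + dotv w v.
Proof. by rewrite !dotvE linearD /= mulmxDl mxE. Qed.

Lemma dotvZl r u v : dotv (r *: u) v = r * dotv u v.
Proof. by rewrite !dotvE linearZ /= -scalemxAl mxE. Qed.

Lemma dotvDr v u w : dotv v (u + w) = dotv v u + dotv v w.
Proof. by rewrite !dotvE mulmxDr mxE. Qed.

Lemma dotvZr v r u : dotv v (r *: u) = r * dotv v u.
Proof. by rewrite !dotvE -scalemxAr mxE. Qed.

Lemma dotv_suml m (u : 'I_m -> 'cV[R]_n) v :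
  dotv (\sum_(i < m) u i) v = \sum_(i < m) dotv (u i) v.
Proof.
elim/big_ind2: _ => [|u1 s1 u2 s2 <- <-|//]; last by rewrite dotvDl.
by rewrite /dotv big1 // => i _; rewrite mxE mul0r.
Qed.

End dot_product.

Lemma dotv_trmx (R : realType) k n (W : 'M[R]_(k, n)) (y : 'cV[R]_k) v :
  dotv (W^T *m y) v = dotv y (W *m v).
Proof. by rewrite !dotvE trmx_mul trmxK mulmxA. Qed.

Section linear_maps.
Variable R : realType.

Lemma continuous_sum (T : topologicalType) (V : normedModType R) m
    (f : 'I_m -> T -> V) :
  (forall i, continuous (f i)) -> continuous (fun x => \sum_(i < m) f i x).
Proof. by move=> f_cont; apply: continuous_big => //; exact: add_continuous. Qed.

Lemma continuous_mulmx k n (W : 'M[R]_(k, n)) :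
  continuous (fun x : 'cV[R]_n => W *m x).
Proof.
have -> : (fun x : 'cV[R]_n => W *m x) = (fun x => \sum_(j < n) x j 0 *: col j W).
  apply/funext => x; apply/matrixP => i l; rewrite summxE !mxE.
  by apply: eq_bigr => j _; rewrite !mxE mulrC ord1.
by apply: continuous_sum => j x; apply: continuousZr_tmp; exact: coord_continuous.
Qed.

Lemma continuous_dotv n (a : 'cV[R]_n) : continuous (dotv a).
Proof.
have -> : dotv a = (fun M : 'M[R]_(1, 1) => M 0 0) \o (fun x => a^T *m x).
  by apply/funext => y; rewrite /= dotvE.
by move=> x; apply: continuous_comp; [exact: continuous_mulmx | exact: coord_continuous].
Qed.

Lemma is_diff_linear (V W : normedModType R) (f : V -> W) x :
  linear f -> continuous f -> is_diff x f f.
Proof.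
move=> f_lin f_cont.
pose fL : {linear V -> W} := HB.pack f (GRing.isLinear.Build _ _ _ _ f f_lin).
apply: DiffDef; first exact: (linear_differentiable (f := fL)).
exact: (diff_lin (f := fL)).
Qed.

Lemma is_diff_affine k n (W : 'M[R]_(k, n)) (b : 'cV[R]_k) x :
  is_diff x (fun y => W *m y + b) (fun v => W *m v).
Proof.
have W_lin : linear (fun y : 'cV[R]_n => W *m y).
  by move=> r u v; rewrite mulmxDr scalemxAr.
have := is_diffD (is_diff_linear x W_lin (continuous_mulmx (W := W))) (is_diff_cst b x).
by move/is_diff_eq; apply; rewrite addr0.
Qed.

End linear_maps.

Section gradients_and_convexity.
Variables (R : realType) (n : nat).
Implicit Types (F G : 'cV[R]_n -> R) (f g : 'cV[R]_n -> 'cV[R]_n) (a : 'cV[R]_n).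

Lemma is_gradientP F f : is_gradient F f <-> forall x, is_diff x F (dotv (f x)).
Proof.
split=> Ff x; first by have [dF eF] := Ff x; apply: DiffDef => //; exact/funext.
by split=> [|v]; [exact: ex_diff | rewrite diff_val].
Qed.

Lemma is_gradient_dotv a : is_gradient (dotv a) (fun=> a).
Proof.
apply/is_gradientP => x; apply: is_diff_linear; last exact: continuous_dotv.
by move=> r u v; rewrite dotvDr dotvZr.
Qed.

Lemma is_gradientD F G f g : is_gradient F f -> is_gradient G g ->
  is_gradient (F + G) (fun x => f x + g x).
Proof.
move=> /is_gradientP Ff /is_gradientP Gg; apply/is_gradientP => x.
apply: is_diff_eq (is_diffD (Ff x) (Gg x)) _.
by apply/funext => v; rewrite /= dotvDl.
Qed.

Lemma is_gradient_sum m (F : 'I_m -> 'cV[R]_n -> R)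
    (f : 'I_m -> 'cV[R]_n -> 'cV[R]_n) :
  (forall i, is_gradient (F i) (f i)) ->
  is_gradient (\sum_(i < m) F i) (fun x => \sum_(i < m) f i x).
Proof.
move=> Ff; have -> : (fun x => \sum_(i < m) f i x) = \sum_(i < m) f i.
  by apply/funext => x; rewrite fct_sumE.
elim/big_ind2: _ => [|F1 f1 F2 f2|//]; last exact: is_gradientD.
apply/is_gradientP => x; apply: is_diff_eq (is_diff_cst 0 x) _.
by apply/funext => v; rewrite /dotv big1 // => i _; rewrite mxE mul0r.
Qed.

Lemma convex_funD F G : convex_fun F -> convex_fun G -> convex_fun (F + G).
Proof.
move=> F_cvx G_cvx x y t t0 t1; rewrite !fctE.
by have := F_cvx x y t t0 t1; have := G_cvx x y t t0 t1; lra.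
Qed.

Lemma convex_fun_sum m (F : 'I_m -> 'cV[R]_n -> R) :
  (forall i, convex_fun (F i)) -> convex_fun (\sum_(i < m) F i).
Proof.
move=> F_cvx; elim/big_ind: _ => [|F1 F2|//]; last exact: convex_funD.
by move=> x y t _ _; rewrite /= !mulr0 addr0.
Qed.

Lemma convex_fun_dotv a : convex_fun (dotv a).
Proof. by move=> x y t _ _; rewrite dotvDr !dotvZr. Qed.

Lemma convex_fun_comp_affine k (W : 'M[R]_(k, n)) (b : 'cV[R]_k)
    (phi : 'cV[R]_k -> R) :
  convex_fun phi -> convex_fun (fun x => phi (W *m x + b)).
Proof.
move=> phi_cvx x y t t0 t1.
have -> : W *m (t *: x + (1 - t) *: y) + b = t *: (W *m x + b) + (1 - t) *: (W *m y + b).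
  rewrite mulmxDr -!scalemxAr !scalerDr addrACA -scalerDl.
  by rewrite [t + _]addrC subrK scale1r.
exact: phi_cvx.
Qed.

Lemma convex_fun_comp_nondecreasing (I : interval R) (g : R -> R)
    (phi : 'cV[R]_n -> R) :
  (forall z, phi z \in I) -> convex_fun phi ->
  convex_on_itv I g -> {in I &, {homo g : u v / u <= v}} -> convex_fun (g \o phi).
Proof.
move=> phiI phi_cvx g_cvx g_mono x y t t0 t1 /=.
apply: le_trans (g_cvx _ _ t (phiI x) (phiI y) t0 t1).
by apply: g_mono; [exact: phiI | exact: convex_comb_in_interval | exact: phi_cvx].
Qed.

End gradients_and_convexity.

Section ridge_unit.
Variables (R : realType) (n k : nat) (W : 'M[R]_(k, n)) (b : 'cV[R]_k).
Variables (I : interval R) (phi : 'cV[R]_k -> R) (sigma : 'cV[R]_k -> 'cV[R]_k).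
Variables (rho : R -> R) (c : R).
Hypothesis phiI : forall z, phi z \in I.
Hypothesis phi_grad : is_gradient phi sigma.
Hypothesis rho_cont : {within [set` I], continuous rho}.
Hypothesis rho_mono : {in I &, {homo rho : x y / x <= y}}.
Hypothesis cI : c \in I.

Definition ridge_potential (x : 'cV[R]_n) := oint rho c (phi (W *m x + b)).

Definition ridge_field (x : 'cV[R]_n) :=
  rho (phi (W *m x + b)) *: (W^T *m sigma (W *m x + b)).

Lemma ridge_potential_convex :
  convex_fun phi -> (forall s, s \in I -> 0 <= rho s) -> convex_fun ridge_potential.
Proof.
move=> phi_cvx rho_ge0.
apply: (convex_fun_comp_nondecreasing (I := I) (g := oint rho c)).
- by move=> x; exact: phiI.
- exact: convex_fun_comp_affine.
- exact: oint_convex.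
- exact: oint_nondecreasing.
Qed.

Lemma ridge_potential_gradient : is_gradient ridge_potential ridge_field.
Proof.
apply/is_gradientP => x; set z := W *m x + b; set s := phi z.
have -> : ridge_potential = oint_tangent I rho c s \o (phi \o (fun y => W *m y + b)).
  by apply/funext => y; rewrite /ridge_potential /oint_tangent /= phiI.
have phi_diff := (is_gradientP _ _).1 phi_grad z.
have T_diff := oint_tangent_is_diff rho_cont rho_mono cI (phiI z).
apply: is_diff_eq (is_diff_comp (is_diff_comp (is_diff_affine W b x) phi_diff) T_diff) _.
apply/funext => v.
by rewrite /ridge_field /= dotvZl dotv_trmx mulrC.
Qed.

Lemma ridge_field_continuous :
  (forall z, differentiable sigma z) -> continuous ridge_field.
Proof.
move=> sigma_diff; have aff_cont : continuous (fun x : 'cV[R]_n => W *m x + b).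
  by move=> x; apply: continuousD; [exact: continuous_mulmx | exact: cst_continuous].
have phi_cont : continuous phi.
  by move=> z; apply: differentiable_continuous; case: (phi_grad z).
move=> x; apply: (continuousZ (s := rho \o (phi \o (fun y => W *m y + b)))
  (f := fun y => W^T *m sigma (W *m y + b))).
  apply: (continuous_within_comp (A := [set` I]) (f := phi \o (fun y => W *m y + b))).
  - by move=> y; exact: phiI.
  - by move=> y; apply: continuous_comp; [exact: aff_cont | exact: phi_cont].
  - exact: rho_cont.
apply: (continuous_comp (f := fun y => sigma (W *m y + b)) (g := fun v => W^T *m v)).
  apply: continuous_comp; first exact: aff_cont.
  exact: differentiable_continuous.
exact: continuous_mulmx.
Qed.

End ridge_unit.

Theorem corollary3 (R : realType) (d M : nat) (k : 'I_M -> nat)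
    (W : forall m : 'I_M, 'M[R]_(k m, d))
    (b : forall m : 'I_M, 'cV[R]_(k m))
    (a : 'cV[R]_d)
    (I : 'I_M -> interval R)
    (phi : forall m : 'I_M, 'cV[R]_(k m) -> R)
    (sigma : forall m : 'I_M, 'cV[R]_(k m) -> 'cV[R]_(k m))
    (rho : 'I_M -> R -> R) :
  (0 < M)%N ->
  (forall m z, phi m z \in I m) ->
  (forall m, convex_fun (phi m)) ->
  (forall m, is_gradient (phi m) (sigma m)) ->
  (forall m z, differentiable (sigma m) z) ->
  (forall m, derivable_on_itv (I m) (rho m)) ->
  (forall m x, x \in I m -> 0 <= rho m x) ->
  (forall m x y, x \in I m -> y \in I m -> x <= y -> rho m x <= rho m y) ->
  mGradNet (fun x : 'cV[R]_d =>
    a + \sum_(m < M)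
          rho m (phi m (W m *m x + b m)) *: ((W m)^T *m sigma m (W m *m x + b m))).
Proof.
move=> _ phiI phi_cvx phi_grad sigma_diff rho_der rho_ge0 rho_mono.
have rho_cont m := derivable_on_itv_continuous (rho_der m).
have rho_homo m : {in I m &, {homo rho m : x y / x <= y}} := rho_mono m.
have cI m : phi m 0 \in I m := phiI m 0.
exists (dotv a + \sum_(m < M) ridge_potential (W m) (b m) (phi m) (rho m) (phi m 0)).
split; [|split].
- apply: convex_funD; first exact: convex_fun_dotv.
  apply: convex_fun_sum => m.
  exact: ridge_potential_convex
    (phiI m) (rho_cont m) (rho_homo m) (cI m) (phi_cvx m) (rho_ge0 m).
- apply: is_gradientD; first exact: is_gradient_dotv.
  apply: is_gradient_sum => m.
  exact: ridge_potential_gradient (phiI m) (phi_grad m) (rho_cont m) (rho_homo m) (cI m).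
- move=> x; apply: continuousD; first exact: cst_continuous.
  apply: continuous_sum => m.
  exact: ridge_field_continuous (phiI m) (phi_grad m) (rho_cont m) (sigma_diff m).
Qed.
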